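(* Let $R$ be a commutative Noetherian ring, $M$ a faithful primeful $R$-module having at least one prime submodule, $X=\mathrm{Spec}(M)$, $N$ an $R$-module, $K\le M$, and $U=X\setminus V(K)$. Then $\Gamma_{(K:M)}(N)=\ker(\epsilon_N^U)$; in particular $\ker(\epsilon_N^U)$ is $(K:M)$-torsion.
   Context: For a submodule $L$ of an $R$-module $M$, $(L:M)=\{r\in R\mid rM\subseteq L\}$. A submodule $P$ of $M$ is prime if $P\neq M$ and whenever $rm\in P$ ($r\in R$, $m\in M$) then $r\in (P:M)$ or $m\in P$. $\mathrm{Spec}(M)$ is the set of prime submodules. $M$ is faithful if $\mathrm{Ann}_R(M)=0$; primeful if $M=0$ or $\mathrm{Spec}(M)\to\mathrm{Spec}(R/\mathrm{Ann}(M))$, $P\mapsto(P:M)/\mathrm{Ann}(M)$, is surjective. For $L\le M$, $V(L)=\{P\in X\mid (P:M)\supseteq (L:M)\}$; these are the closed sets of the Zariski topology. For open $U\subseteq X$, $\mathrm{Supp}(U)=\{(P:M)\mid P\in U\}$. $\mathcal{A}(N,M)(U)$ is the $R$-module of families $(\gamma_{\mathfrak p})_{\mathfrak p\in\mathrm{Supp}(U)}\in\prod_{\mathfrak p\in\mathrm{Supp}(U)}N_{\mathfrak p}$ such that for each $Q\in U$ there exist an open neighbourhood $W\subseteq U$ of $Q$ and $s\in R$, $m\in N$ with $s\notin (P:M)$ and $\gamma_{(P:M)}=m/s$ for every $P\in W$. $\epsilon_N^U:N\to\mathcal{A}(N,M)(U)$ is $n\mapsto(n/1)_{\mathfrak p\in\mathrm{Supp}(U)}$.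 For an ideal $I$, $\Gamma_I(H)=\bigcup_{n\ge1}(0:_H I^n)$, and $H$ is $I$-torsion if $H=\Gamma_I(H)$. *)

From mathcomp Require Import all_boot all_algebra.
Set Implicit Arguments. Unset Strict Implicit. Unset Printing Implicit Defensive.
Import GRing.Theory.
Local Open Scope ring_scope.

Section ModuleDefs.
Variable R : comNzRingType.

Definition is_ideal (I : R -> Prop) : Prop :=
  I 0 /\ (forall x y, I x -> I y -> I (x + y)) /\ (forall r x, I x -> I (r * x)).

Definition prime_ideal (p : R -> Prop) : Prop :=
  is_ideal p /\ ~ p 1 /\ (forall a b, p (a * b) -> p a \/ p b).

Definition noetherian : Prop :=
  forall I : nat -> R -> Prop, (forall n, is_ideal (I n)) ->
    (forall n r, I n r -> I n.+1 r) ->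
    exists k, forall n, (k <= n)%N -> forall r, I n r -> I k r.

Definition ideal_mul (I J : R -> Prop) : R -> Prop := fun r =>
  exists s : seq (R * R), (forall x, x \in s -> I x.1 /\ J x.2) /\
                          r = \sum_(x <- s) x.1 * x.2.

Fixpoint ideal_pow (I : R -> Prop) (n : nat) : R -> Prop :=
  match n with
  | 0 => fun _ => True
  | n'.+1 => ideal_mul (ideal_pow I n') I
  end.

Section OneModule.
Variable M : lmodType R.

Definition is_submod (L : M -> Prop) : Prop :=
  L 0 /\ (forall x y, L x -> L y -> L (x + y)) /\ (forall r x, L x -> L (r *: x)).

Definition colon (L : M -> Prop) : R -> Prop := fun r => forall m, L (r *: m).

Definition prime_submod (P : M -> Prop) : Prop :=
  is_submod P /\ (exists m, ~ P m) /\
  (forall r m, P (r *: m) -> colon P r \/ P m).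

Definition annihilator : R -> Prop := fun r => forall m : M, r *: m = 0.

Definition faithful : Prop := forall r, annihilator r -> r = 0.

(* primeful: M = 0, or every prime of R/Ann(M) (i.e. every prime ideal of R
   containing Ann(M)) is of the form (P:M)/Ann(M) for some prime submodule P *)
Definition primeful : Prop :=
  (forall m : M, m = 0) \/
  (forall q, prime_ideal q -> (forall r, annihilator r -> q r) ->
     exists P, prime_submod P /\ (forall r, colon P r <-> q r)).

Definition V (L : M -> Prop) : (M -> Prop) -> Prop := fun P =>
  prime_submod P /\ (forall r, colon L r -> colon P r).

Definition compV (L : M -> Prop) : (M -> Prop) -> Prop := fun P =>
  prime_submod P /\ ~ V L P.

Definition zopen (W : (M -> Prop) -> Prop) : Prop :=
  exists L, is_submod L /\ forall P, W P <-> compV L P.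

End OneModule.

Section Localization.
Variable N : lmodType R.

(* equality of fractions a.1/a.2 and b.1/b.2 in N_p *)
Definition loc_eq (p : R -> Prop) (a b : N * R) : Prop :=
  exists t, ~ p t /\ t *: (b.2 *: a.1 - a.2 *: b.1) = 0.

Variable M : lmodType R.

(* A family in prod_{p in Supp U} N_p, indexed by ideals p = (P:M);
   gamma p is a representative fraction (m, s) of gamma_p. *)
Definition family (U : (M -> Prop) -> Prop) (g : (R -> Prop) -> N * R) : Prop :=
  forall P, U P -> ~ colon P (g (colon P)).2.

Definition fam_eq (U : (M -> Prop) -> Prop) (g h : (R -> Prop) -> N * R) : Prop :=
  forall P, U P -> loc_eq (colon P) (g (colon P)) (h (colon P)).

Definition is_section (U : (M -> Prop) -> Prop) (g : (R -> Prop) -> N * R) : Prop :=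
  family U g /\
  forall Q, U Q -> exists W, zopen W /\ (forall P, W P -> U P) /\ W Q /\
    exists (s : R) (m : N), forall P, W P ->
      ~ colon P s /\ loc_eq (colon P) (g (colon P)) (m, s).

Definition eps (n : N) : (R -> Prop) -> N * R := fun _ => (n, 1).

Definition ker_eps (U : (M -> Prop) -> Prop) : N -> Prop := fun n =>
  fam_eq U (eps n) (eps 0).

End Localization.

Definition Gamma (N : lmodType R) (I : R -> Prop) (H : N -> Prop) : N -> Prop :=
  fun x => H x /\ exists n, (0 < n)%N /\ forall r, ideal_pow I n r -> r *: x = 0.

Definition torsion (N : lmodType R) (I : R -> Prop) (H : N -> Prop) : Prop :=
  forall x, H x -> Gamma I H x.

End ModuleDefs.

(* A torsion element n of Gamma_(K:M)(N) dies in every localization at a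
   prime (P:M) not containing (K:M), since some a in (K:M) \ (P:M) has
   a^k n = 0.  Conversely, if n/1 = 0 on U, then every prime q containing
   Ann(n) contains (K:M): by primefulness and faithfulness q = (P:M), and
   P not in U would give some t outside q killing n.  Hence (K:M) lies in
   the radical of Ann(n), and as R is Noetherian a power of (K:M) kills n.
   The last step uses the chain of colon ideals (Ann(n) : (K:M)^k) and an
   associated prime of the stable term. *)

From mathcomp Require Import all_boot all_algebra.
From mathcomp Require Import ring.
From Stdlib Require Import Classical ClassicalEpsilon.
Set Implicit Arguments. Unset Strict Implicit. Unset Printing Implicit Defensive.
Import GRing.Theory.
Local Open Scope ring_scope.

Section IdealTheory.
Variable R : comNzRingType.
Implicit Types (I J L q : R -> Prop) (r x a : R).

Lemma is_ideal_colon_elt L x : is_ideal L -> is_ideal (fun r => L (r * x)).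
Proof.
move=> [L0 [LD LM]]; split; [|split].
- by rewrite mul0r.
- by move=> a b Ha Hb; rewrite mulrDl; apply: LD.
- by move=> r a Ha; rewrite -mulrA; apply: LM.
Qed.

Lemma ideal_pow_exp I a k : I a -> ideal_pow I k (a ^+ k).
Proof.
move=> Ia; elim: k => [|k IH] //=.
exists [:: (a ^+ k, a)]; split; first by move=> z; rewrite inE => /eqP ->.
by rewrite big_cons big_nil addr0 exprSr.
Qed.

Lemma prime_ideal_exp q a k : prime_ideal q -> ~ q a -> ~ q (a ^+ k).
Proof.
move=> [[q0 [_ qM]] [q1 qP]] qa; elim: k => [|k IH]; first by rewrite expr0.
by rewrite exprSr => /qP [].
Qed.

Lemma ideal_mul_ind J I1 I2 r : is_ideal J ->
  (forall a b, I1 a -> I2 b -> J (r * (a * b))) ->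
  forall x, ideal_mul I1 I2 x -> J (r * x).
Proof.
move=> [J0 [JD _]] HJ x [s [Hs ->]]; elim: s Hs => [|z s IH] Hs.
  by rewrite big_nil mulr0.
rewrite big_cons mulrDr; apply: JD.
  by case: (Hs z (mem_head _ _)) => ??; apply: HJ.
by apply: IH => w Hw; apply: Hs; rewrite inE Hw orbT.
Qed.

Definition pow_colon J I k : R -> Prop :=
  fun r => forall x, ideal_pow I k x -> J (r * x).

Section PowColon.
Variables (J I : R -> Prop).
Hypothesis J_ideal : is_ideal J.

Lemma is_ideal_pow_colon k : is_ideal (pow_colon J I k).
Proof.
case: J_ideal => [J0 [JD JM]]; split; [|split].
- by move=> x _; rewrite mul0r.
- by move=> a b Ha Hb x Hx; rewrite mulrDl; apply: JD; [apply: Ha | apply: Hb].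
- by move=> r a Ha x Hx; rewrite -mulrA; apply: JM; apply: Ha.
Qed.

Lemma pow_colonS k r : pow_colon J I k r -> pow_colon J I k.+1 r.
Proof.
move=> Hr; apply: ideal_mul_ind => // x b Hx _.
have -> : r * (x * b) = b * (r * x) by ring.
by case: J_ideal => _ [_ JM]; apply/JM/Hr.
Qed.

Lemma pow_colonS_mul k r :
  (forall a, I a -> pow_colon J I k (r * a)) -> pow_colon J I k.+1 r.
Proof.
move=> Hr; apply: ideal_mul_ind => // x a Hx Ha.
have -> : r * (x * a) = r * a * x by ring.
exact: Hr.
Qed.

End PowColon.

Section Noetherian.
Hypothesis R_noeth : noetherian R.

Lemma noetherian_max_colon L : is_ideal L -> ~ L 1 ->
  exists x, ~ L x /\ forall y, ~ L y ->
    (forall r, L (r * x) -> L (r * y)) -> forall r, L (r * y) -> L (r * x).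
Proof.
move=> L_ideal L1; apply: NNPP => no_max.
have step x : exists y, ~ L x -> ~ L y /\ (forall r, L (r * x) -> L (r * y))
    /\ exists r, L (r * y) /\ ~ L (r * x).
  case: (classic (L x)) => Lx; first by exists x.
  apply: NNPP => no_y; apply: no_max; exists x; split => // y Ly Hxy r Hr.
  by apply: NNPP => Hrx; apply: no_y; exists y => _; do 2?split => //; exists r.
pose g x := proj1_sig (constructive_indefinite_description _ (step x)).
have gP x : ~ L x -> ~ L (g x) /\ (forall r, L (r * x) -> L (r * g x))
    /\ exists r, L (r * g x) /\ ~ L (r * x).
  by rewrite /g; case: constructive_indefinite_description.
pose xs k := iter k g 1.
have xsP k : ~ L (xs k) by elim: k => [|k IH] //=; case: (gP _ IH).
have [k0 Hk0] := R_noeth (fun k => is_ideal_colon_elt (xs k) L_ideal)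
  (fun k r => proj1 (proj2 (gP _ (xsP k))) r).
case: (gP _ (xsP k0)) => _ [_ [r [Hr Hnr]]].
by apply/Hnr/(Hk0 k0.+1 (leqnSn k0)).
Qed.

Lemma noetherian_prime_colon L : is_ideal L -> ~ L 1 ->
  exists x, ~ L x /\ prime_ideal (fun r => L (r * x)).
Proof.
move=> L_ideal L1; have [x [Lx x_max]] := noetherian_max_colon L_ideal L1.
exists x; split => //; split; first exact: is_ideal_colon_elt.
split; first by rewrite mul1r.
move=> a b /= Habx; case: (classic (L (b * x))) => Lbx; [by right | left].
apply: (x_max _ Lbx); last by rewrite mulrA.
move=> r Hr; rewrite mulrCA; by case: L_ideal => _ [_ LM]; apply: LM.
Qed.

Lemma noetherian_pow_sub_of_primes J I : is_ideal J ->
  (forall q, prime_ideal q -> (forall r, J r -> q r) -> forall a, I a -> q a) ->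
  exists k, (0 < k)%N /\ forall r, ideal_pow I k r -> J r.
Proof.
move=> J_ideal I_rad.
have [k0 Hk0] := R_noeth (is_ideal_pow_colon I J_ideal) (pow_colonS J_ideal).
have Lk0_1 : pow_colon J I k0 1.
  apply: NNPP => L1; have [x [Lx q_prime]] := noetherian_prime_colon
    (is_ideal_pow_colon I J_ideal k0) L1.
  have J_sub_q r : J r -> pow_colon J I k0 (r * x).
    by move=> Jr y _; rewrite -mulrA; case: J_ideal => _ [_ JM]; rewrite mulrC; apply: JM.
  apply/Lx/(Hk0 k0.+1 (leqnSn k0))/(pow_colonS_mul J_ideal) => a Ia.
  by rewrite mulrC; apply: (I_rad _ q_prime J_sub_q).
exists k0.+1; split => // r Hr.
by have := pow_colonS J_ideal Lk0_1 Hr; rewrite mul1r.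
Qed.

End Noetherian.
End IdealTheory.

Section Modules.
Variable R : comNzRingType.

Lemma is_ideal_ann (N : lmodType R) (n : N) : is_ideal (fun r : R => r *: n = 0).
Proof.
split; [|split]; first by rewrite scale0r.
- by move=> x y Hx Hy; rewrite scalerDl Hx Hy addr0.
- by move=> r x Hx; rewrite -scalerA Hx scaler0.
Qed.

Variable M : lmodType R.

Lemma prime_submod_colon (P : M -> Prop) : prime_submod P -> prime_ideal (colon P).
Proof.
move=> [[P0 [PD PZ]] [[m Pm] Pprime]]; split; [split; [|split] | split].
- by move=> x; rewrite scale0r.
- by move=> a b Ha Hb x; rewrite scalerDl; apply: PD.
- by move=> r a Ha x; rewrite -scalerA; apply: PZ.
- by move=> H1; apply: Pm; rewrite -[m]scale1r.
- move=> a b Hab; case: (classic (colon P a)) => Ha; [by left | right].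
  by move=> x; have := Hab x; rewrite -scalerA => /Pprime [].
Qed.

Lemma faithful_primeful_colon_onto : faithful M -> primeful M ->
  forall q : R -> Prop, prime_ideal q ->
  exists P : M -> Prop, prime_submod P /\ forall r, colon P r <-> q r.
Proof.
move=> M_faithful M_primeful q q_prime.
case: M_primeful => [M0 | M_primeful].
  have ann1 : annihilator M 1 by move=> m; rewrite (M0 m) scaler0.
  by have := @oner_neq0 R; rewrite (M_faithful 1 ann1) eqxx.
apply: M_primeful => // r /M_faithful ->; by case: q_prime => [[]].
Qed.

Lemma ker_epsP (N : lmodType R) (U : (M -> Prop) -> Prop) (n : N) :
  ker_eps U n <-> forall P, U P -> exists t, ~ colon P t /\ t *: n = 0.
Proof. by rewrite /ker_eps /fam_eq /loc_eq /= scale1r scaler0 subr0. Qed.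

Variables (N : lmodType R) (K : M -> Prop).

Lemma Gamma_sub_ker_eps (n : N) :
  Gamma (colon K) (fun _ => True) n -> ker_eps (compV K) n.
Proof.
move=> [_ [k [_ Ik_n]]]; apply/ker_epsP => P [P_prime notVP].
have [a [Ka Pa]] : exists a, colon K a /\ ~ colon P a.
  apply: NNPP => H; apply: notVP; split => // r Kr.
  by apply: NNPP => Pr; apply: H; exists r.
exists (a ^+ k); split; first exact/prime_ideal_exp/Pa/prime_submod_colon.
exact/Ik_n/ideal_pow_exp.
Qed.

Lemma ker_eps_primes_over_ann : faithful M -> primeful M -> forall n : N,
  ker_eps (compV K) n -> forall q : R -> Prop, prime_ideal q ->
  (forall r, r *: n = 0 -> q r) -> forall a, colon K a -> q a.
Proof.
move=> M_faithful M_primeful n /ker_epsP ker_n q q_prime ann_q a Ka.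
apply: NNPP => qa.
have [P [P_prime Pq]] := faithful_primeful_colon_onto M_faithful M_primeful q_prime.
have [|t [Pt tn]] := ker_n P; last by apply/Pt/Pq/ann_q.
by split => // -[_ VP]; apply/qa/Pq/VP.
Qed.

End Modules.

Theorem proposition3p8 (R : comNzRingType) (M N : lmodType R) (K : M -> Prop) :
  noetherian R -> faithful M -> primeful M ->
  (exists P : M -> Prop, prime_submod P) -> is_submod K ->
  (forall n : N, Gamma (colon K) (fun _ => True) n <-> @ker_eps R N M (compV K) n) /\
  torsion (colon K) (@ker_eps R N M (compV K)).
Proof.
move=> R_noeth M_faithful M_primeful _ _.
have Gamma_ker (n : N) :
    Gamma (colon K) (fun _ => True) n <-> ker_eps (compV K) n.
  split; first exact: Gamma_sub_ker_eps.
  move=> ker_n; split => //.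
  apply: noetherian_pow_sub_of_primes (is_ideal_ann n) _ => //.
  exact: ker_eps_primes_over_ann.
split => // n ker_n; split => //.
by case: (Gamma_ker n).2.
Qed.
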